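(* Let $r\ge2$, $n\ge2r$, and let $H\subseteq\binom{\Omega_n}{r}$ be $M_1^{(r)}$-saturated. Then: (1) every vertex of $\Omega_n$ lies in some edge of $H$ (so $\lambda(v_i),\rho(v_i)$ are defined for all $i$); (2) for all $i$, $\lambda(v_i)\notin[v_{i-r+2},v_{i+r-1}]$ and $\rho(v_i)\notin[v_{i-r+1},v_{i+r-2}]$; (3) for all $i$, $\rho(v_i)\in(v_i,\lambda(v_i)]$, i.e. going clockwise from $v_i$ one reaches $\rho(v_i)$ no later than $\lambda(v_i)$ (possibly $\rho(v_i)=\lambda(v_i)$), and both differ from $v_i$; (4) for all $i$, if $v_j\in[\rho(v_i),\lambda(v_i)]$ then every $e\in\binom{\Omega_n}{r}$ with $\{v_i,v_j\}\subseteq e$ belongs to $H$.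
   Context: $\Omega_n=\{v_0,\dots,v_{n-1}\}$ with cyclic order $v_0<\dots<v_{n-1}<v_0$, indices mod $n$. For distinct vertices $u,w$, $(u,w)$ is the set of vertices strictly between $u$ and $w$ moving clockwise from $u$ to $w$; $[u,w]=(u,w)\cup\{u,w\}$, $(u,w]=(u,w)\cup\{w\}$, $[u,w)=(u,w)\cup\{u\}$. An $r$-cgh $H\subseteq\binom{\Omega_n}{r}$ is $M_1^{(r)}$-saturated if there are no edges $h_1,h_2\in H$ and vertices $u\neq u'$ with $h_1\subseteq[u,u']$ and $h_2\cap[u,u']=\emptyset$, but for every $e\in\binom{\Omega_n}{r}\setminus H$ such a pair exists in $H\cup\{e\}$. For a vertex $v_i$ lying in some edge of $H$: $\lambda(v_i)$ is the vertex $u$ such that some $h\in H$ with $v_i\in h$ satisfies $h\subseteq[u,v_i]$, while no $h\in H$ with $v_i\in h$ satisfies $h\subseteq[u',v_i]$ where $u'$ is the clockwise successor of $u$ (i.e. $[u,v_i]$ is the shortest counterclockwise-ending arc at $v_i$ containing an edge through $v_i$). Symmetrically, $\rho(v_i)$ is the vertex $u$ such that some $h\in H$ with $v_i\in h$ satisfies $h\subseteq[v_i,u]$ but no such edge lies in $[v_i,u'']$ with $u''$ the clockwise predecessor of $u$. *)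

(* Vertices of Omega_n are the ordinals 'I_n (v_i = i). *)
From mathcomp Require Import all_boot.
Set Implicit Arguments. Unset Strict Implicit. Unset Printing Implicit Defensive.

Section Cyclic.
Variable n : nat.

(* clockwise distance from u to x : (x - u) mod n *)
Definition cdist (u x : 'I_n) : nat := (x + n - u) %% n.

(* closed arc [u,w] : vertices met going clockwise from u to w *)
Definition carc (u w : 'I_n) : {set 'I_n} := [set x | cdist u x <= cdist u w].
Definition oarc (u w : 'I_n) : {set 'I_n} :=
  [set x | 0 < cdist u x < cdist u w].
Definition ocarc (u w : 'I_n) : {set 'I_n} :=
  [set x | 0 < cdist u x <= cdist u w].

Lemma ord_pos (i : 'I_n) : 0 < n.
Proof. exact: leq_ltn_trans (leq0n i) (ltn_ord i). Qed.

(* v_{i+k} and v_{i-k} (indices mod n) *)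
Definition vadd (i : 'I_n) (k : nat) : 'I_n :=
  Ordinal (ltn_pmod (i + k) (ord_pos i)).
Definition vsub (i : 'I_n) (k : nat) : 'I_n := vadd i (n - k %% n).

Definition vsucc (u : 'I_n) : 'I_n := vadd u 1.
Definition vpred (u : 'I_n) : 'I_n := vsub u 1.

Definition uniform (r : nat) (H : {set {set 'I_n}}) : Prop :=
  forall h, h \in H -> #|h| = r.

(* H contains a copy of M_1^(r) *)
Definition has_M1 (H : {set {set 'I_n}}) : Prop :=
  exists h1 h2 u u', [/\ h1 \in H, h2 \in H, u != u',
                         h1 \subset carc u u' & h2 :&: carc u u' = set0].

Definition M1_saturated (r : nat) (H : {set {set 'I_n}}) : Prop :=
  uniform r H /\ ~ has_M1 H /\
  forall e : {set 'I_n}, #|e| = r -> e \notin H -> has_M1 (e |: H).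

Definition is_lambda (H : {set {set 'I_n}}) (v u : 'I_n) : Prop :=
  (exists2 h, h \in H & (v \in h) && (h \subset carc u v)) /\
  ~ (exists2 h, h \in H & (v \in h) && (h \subset carc (vsucc u) v)).

Definition is_rho (H : {set {set 'I_n}}) (v u : 'I_n) : Prop :=
  (exists2 h, h \in H & (v \in h) && (h \subset carc v u)) /\
  ~ (exists2 h, h \in H & (v \in h) && (h \subset carc v (vpred u))).

End Cyclic.

From mathcomp Require Import all_boot zify.
Set Implicit Arguments. Unset Strict Implicit. Unset Printing Implicit Defensive.

(* Vertices are compared through their clockwise distance cdist v x from a base
   vertex v (their position seen from v); an arc is then an interval of positions
   or the complement of one (mem_carc).  Saturation is restated as separation: no
   edge lies in an arc avoiding another edge, while every non-edge r-set e lies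
   beside some edge; seen from a vertex v of e, that edge fills a gap (b, a) of
   positions free of e (nonedge_gap), and no edge may fill a gap avoided by
   another edge (no_edge_in_gap).

   Around a fixed v, far_edge v k says that some edge through v has all its other
   vertices at distance >= k, and near_edge v k that some edge through v lies
   within distance k; lambda(v) and rho(v) sit at the extreme levels of these
   (lambdaE, rhoE).  The key tool is an exchange argument (exchange_gap): an edge
   avoiding v can be pushed onto v while staying beyond, resp. within, distance k
   (far_edge_of_edge, near_edge_of_edge).  This yields (1) and the existence of
   lambda and rho, far and near edges at the levels r and n - r (hence the bounds
   of (2)), and, by examining the edge in the gap of well-chosen r-sets through v,
   the comparison rho <= lambda of (3) and the completeness statement (4). *)

Section Positions.
Variable n : nat.
Implicit Types (u v w x : 'I_n) (X Y : {set 'I_n}).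

Lemma cdistE u x : cdist u x = if u <= x then x - u else x + n - u.
Proof.
rewrite /cdist; have := ltn_ord u; have := ltn_ord x; case: (leqP u x) => hux hx hu.
  have -> : x + n - u = (x - u) + n by lia.
  by rewrite modnDr modn_small //; lia.
by rewrite modn_small //; lia.
Qed.

Lemma cdist_lt v x : cdist v x < n.
Proof. by rewrite cdistE; have := ltn_ord v; have := ltn_ord x; case: ifP; lia. Qed.

Lemma cdist_inj v : injective (cdist v).
Proof.
move=> x y; rewrite !cdistE => exy; apply/val_inj => /=; move: exy.
by have := ltn_ord v; have := ltn_ord x; have := ltn_ord y; do 2 case: ifP; lia.
Qed.

Lemma cdist_eq0 v x : (cdist v x == 0) = (x == v).
Proof.
apply/eqP/eqP => [|->]; last by rewrite cdistE leqnn subnn.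
rewrite cdistE => h; apply/val_inj => /=; move: h.
by have := ltn_ord x; have := ltn_ord v; case: ifP; lia.
Qed.

Lemma cdist_id v : cdist v v = 0.
Proof. by apply/eqP; rewrite cdist_eq0. Qed.

Lemma cdist_vadd_shift v u k : k < n ->
  cdist v (vadd u k) = if cdist v u + k < n then cdist v u + k else cdist v u + k - n.
Proof.
move=> hk; have hu := ltn_ord u; have hv := ltn_ord v; rewrite !cdistE.
have -> : nat_of_ord (vadd u k) = if u + k < n then u + k else u + k - n.
  rewrite /=; case: ltnP => h; first exact: modn_small.
  by rewrite -{1}(subnK h) modnDr modn_small //; lia.
by do ! case: ifP; lia.
Qed.

Lemma cdist_vadd v k : k < n -> cdist v (vadd v k) = k.
Proof. by move=> hk; rewrite cdist_vadd_shift // cdist_id add0n hk. Qed.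

Lemma vadd_cdist v x : vadd v (cdist v x) = x.
Proof. by apply: (@cdist_inj v); rewrite cdist_vadd ?cdist_lt. Qed.

Lemma cdist_vsucc v u : 1 < n ->
  cdist v (vsucc u) = if cdist v u + 1 < n then cdist v u + 1 else 0.
Proof. by move=> hn; rewrite cdist_vadd_shift //; have := cdist_lt v u; case: ifP; lia. Qed.

Lemma cdist_vpred v u : 1 < n ->
  cdist v (vpred u) = if cdist v u == 0 then n - 1 else cdist v u - 1.
Proof.
move=> hn; rewrite /vpred /vsub (modn_small hn) cdist_vadd_shift; last by lia.
by have := cdist_lt v u; case: ifP; case: eqP; lia.
Qed.

Lemma cdist_vsub v k : k < n -> cdist v (vsub v k) = if k == 0 then 0 else n - k.
Proof.
rewrite /vsub => hk; rewrite (modn_small hk); case: eqP => [->|k0]; last first.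
  by rewrite cdist_vadd //; lia.
have -> : vadd v (n - 0) = v by apply/val_inj; rewrite /= subn0 modnDr modn_small.
exact: cdist_id.
Qed.

Lemma mem_carc v a c t : (t \in carc a c) =
  if cdist v a <= cdist v c then cdist v a <= cdist v t <= cdist v c
  else (cdist v a <= cdist v t) || (cdist v t <= cdist v c).
Proof.
rewrite /carc inE !cdistE.
have := ltn_ord v; have := ltn_ord a; have := ltn_ord c; have := ltn_ord t.
by do ! case: ifP; move=> *; apply/idP/idP; lia.
Qed.

Definition window v lo hi : {set 'I_n} := [set x | lo <= cdist v x <= hi].

Lemma card_window v lo hi : hi < n -> lo <= hi.+1 -> #|window v lo hi| = hi.+1 - lo.
Proof.
move=> hhi hlo; have lt_n (i : 'I_(hi.+1 - lo)) : lo + i < n by have := ltn_ord i; lia.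
have -> : window v lo hi = [set vadd v (lo + i) | i : 'I_(hi.+1 - lo)].
  apply/setP => x; rewrite inE; apply/idP/imsetP => [hx|[i _ ->]].
    have hi' : cdist v x - lo < hi.+1 - lo by lia.
    by exists (Ordinal hi'); rewrite //= subnKC ?vadd_cdist //; lia.
  by rewrite cdist_vadd //; have := ltn_ord i; lia.
rewrite card_imset ?card_ord // => i j /(congr1 (cdist v)).
by rewrite !cdist_vadd // => /addnI/val_inj.
Qed.

Lemma card_le_window v lo hi (A : {set 'I_n}) : hi < n -> lo <= hi.+1 ->
  (forall x, x \in A -> lo <= cdist v x <= hi) -> #|A| <= hi.+1 - lo.
Proof.
move=> hhi hlo hA; rewrite -(card_window v hhi hlo); apply: subset_leq_card.
by apply/subsetP => x /hA; rewrite inE.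
Qed.

Lemma card_fan v lo hi : 0 < lo -> hi < n -> lo <= hi.+1 ->
  #|v |: window v lo hi| = (hi.+1 - lo).+1.
Proof.
by move=> lo0 hhi hlo; rewrite cardsU1 card_window // inE cdist_id leqNgt lo0.
Qed.

(* X is separated from Y when some arc [u,u'] with u != u' contains X and misses Y;
   M_1^(r) is exactly a pair of edges separated in this way. *)
Definition separated X Y : Prop :=
  exists u u', [/\ u != u', forall x, x \in X -> x \in carc u u'
                          & forall y, y \in Y -> y \notin carc u u'].

Lemma separated_gap v X Y : v \in X -> separated X Y \/ separated Y X ->
  exists b a, [/\ b < a <= n, forall x, x \in X -> ~~ (b < cdist v x < a)
                            & forall y, y \in Y -> b < cdist v y < a].
Proof.
have pos_lt := cdist_lt v; move=> vX [] [u [u' [_ sA sB]]].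
- move: (sA v vX); rewrite (mem_carc v) cdist_id; case: leqP => huu' hv.
  + exists (cdist v u'), n; split; first by have := pos_lt u'; lia.
      by move=> x /sA; rewrite (mem_carc v); case: ifP; lia.
    by move=> y /sB; rewrite (mem_carc v); have := pos_lt y; case: ifP; lia.
  + exists (cdist v u'), (cdist v u); split; first by have := pos_lt u; lia.
      by move=> x /sA; rewrite (mem_carc v); case: ifP; lia.
    by move=> y /sB; rewrite (mem_carc v); case: ifP; lia.
- move: (sB v vX); rewrite (mem_carc v) cdist_id; case: leqP => huu' hv; last by lia.
  exists (cdist v u - 1), (cdist v u').+1; split; first by have := pos_lt u'; lia.
    by move=> x /sB; rewrite (mem_carc v); case: ifP; lia.
  by move=> y /sA; rewrite (mem_carc v); case: ifP; lia.
Qed.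

End Positions.

Section Saturated.
Variables (n r : nat) (H : {set {set 'I_n}}).
Hypotheses (r_ge2 : 2 <= r) (n_ge2r : 2 * r <= n) (satH : M1_saturated r H).
Implicit Types (u v w x y : 'I_n) (e h : {set 'I_n}).

Lemma edge_card h : h \in H -> #|h| = r.
Proof. by case: satH => unifH _; apply: unifH. Qed.

Lemma edge_other v h : h \in H -> exists2 x, x \in h & x != v.
Proof.
move=> hH; have : ~~ (h \subset [set v]).
  by apply/negP => /subset_leq_card; rewrite cards1 edge_card //; lia.
by case/subsetPn => x xh; rewrite in_set1 => xv; exists x.
Qed.

Lemma edges_not_separated h h' : h \in H -> h' \in H -> ~ separated h h'.
Proof.
move=> hH h'H [u [u' [uu' inh outh']]]; case: satH => _ [noM1 _]; apply: noM1.
exists h, h', u, u'; split => //; first by apply/subsetP.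
apply/setP => y; rewrite in_setI in_set0.
by case: (boolP (y \in h')) => //= /outh' /negbTE.
Qed.

Lemma nonedge_separated e : #|e| = r -> e \notin H ->
  exists2 h, h \in H & separated e h \/ separated h e.
Proof.
move=> ce eH; case: satH => _ [noM1 maxH].
case: (maxH e ce eH) => h1 [h2 [u [u' [h1e h2e uu' sub1 cap2]]]].
have in1 x : x \in h1 -> x \in carc u u' by apply/subsetP.
have out2 y : y \in h2 -> y \notin carc u u'.
  by move=> yh; apply/negP => ya; move/setP/(_ y): cap2; rewrite in_setI yh ya in_set0.
move: h1e h2e; rewrite !in_setU1 => /orP[/eqP e1|h1H] /orP[/eqP e2|h2H].
- have /card_gt0P[x xe] : 0 < #|e| by lia.
  by move: (out2 x); rewrite e2 (in1 x) ?e1 // => /(_ xe).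
- by exists h2 => //; left; exists u, u'; rewrite -e1.
- by exists h1 => //; right; exists u, u'; rewrite -e2.
- by exfalso; apply: noM1; exists h1, h2, u, u'.
Qed.

Lemma no_edge_in_gap v b a h h' : a <= n -> h \in H -> h' \in H ->
  (forall x, x \in h -> b < cdist v x < a) ->
  (forall y, y \in h' -> ~~ (b < cdist v y < a)) -> False.
Proof.
move=> an hH h'H inh outh'.
have /card_gt1P[x1 [x2 [x1h x2h x12]]] : 1 < #|h| by rewrite edge_card.
have := inh x1 x1h; have := inh x2 x2h.
rewrite -(inj_eq (@cdist_inj _ v)) in x12; move: x12 => x12 hx2 hx1.
apply: (edges_not_separated hH h'H); exists (vadd v b.+1), (vadd v (a - 1)); split.
- by apply/eqP => /(congr1 (cdist v)); rewrite !cdist_vadd; lia.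
- by move=> x /inh; rewrite (mem_carc v) !cdist_vadd; try lia; case: ifP; lia.
- by move=> y /outh'; rewrite (mem_carc v) !cdist_vadd; try lia; case: ifP; lia.
Qed.

Lemma nonedge_gap v e : #|e| = r -> e \notin H -> v \in e ->
  exists2 h, h \in H & exists b a, [/\ b < a <= n,
    forall x, x \in e -> ~~ (b < cdist v x < a) & forall x, x \in h -> b < cdist v x < a].
Proof.
move=> ce eH ve; case: (nonedge_separated ce eH) => h hH sep.
by exists h => //; apply: separated_gap.
Qed.

Lemma exchange_gap v h0 y : h0 \in H -> v \notin h0 -> y \in h0 ->
  v |: (h0 :\ y) \notin H ->
  exists2 h, h \in H & exists b a, [/\ b < cdist v y < a,
    forall x, x \in h0 -> x != y -> ~~ (b < cdist v x < a)
  & forall x, x \in h -> b < cdist v x < a].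
Proof.
move=> h0H vh0 yh0 eH.
have ce : #|v |: (h0 :\ y)| = r.
  have := cardsD1 y h0; rewrite yh0 edge_card // => ->.
  by rewrite cardsU1 in_setD1 (negbTE vh0) andbF.
have in_e x : x \in h0 -> x != y -> x \in v |: (h0 :\ y).
  by move=> xh xy; rewrite in_setU1 in_setD1 xy xh orbT.
case: (nonedge_gap ce eH (setU11 v _)) => h hH [b [a [ban oute inh]]].
exists h => //; exists b, a; split => // [|x xh xy]; last exact/oute/in_e.
apply/negPn/negP => youty; apply: (no_edge_in_gap _ hH h0H inh) => [|x xh]; first by lia.
by case: (eqVneq x y) => [-> //|xy]; apply/oute/in_e.
Qed.

(* far_edge v k: some edge through v has all its other vertices at clockwise
   distance at least k from v; lambda(v) sits at the largest such k.
   near_edge v k: some edge through v lies within clockwise distance k of v;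
   rho(v) sits at the least such k. *)
Definition far_edge v k : bool :=
  [exists h in H, (v \in h) && [forall x in h, (x != v) ==> (k <= cdist v x)]].
Definition near_edge v k : bool :=
  [exists h in H, (v \in h) && [forall x in h, cdist v x <= k]].

Lemma far_edgeP v k : reflect
  (exists2 h, h \in H & v \in h /\ forall x, x \in h -> x != v -> k <= cdist v x)
  (far_edge v k).
Proof.
apply: (iffP exists_inP) => [[h hH /andP[vh /forall_inP hx]]|[h hH [vh hx]]].
  by exists h => //; split => // x xh; apply/implyP/hx.
by exists h => //; rewrite vh; apply/forall_inP => x xh; apply/implyP/hx.
Qed.

Lemma near_edgeP v k : reflect
  (exists2 h, h \in H & v \in h /\ forall x, x \in h -> cdist v x <= k)
  (near_edge v k).
Proof.
apply: (iffP exists_inP) => [[h hH /andP[vh /forall_inP hx]]|[h hH [vh hx]]].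
  by exists h.
by exists h => //; rewrite vh; apply/forall_inP.
Qed.

Lemma far_edge_mono v k k' : k' <= k -> far_edge v k -> far_edge v k'.
Proof.
move=> kk' /far_edgeP[h hH [vh hx]]; apply/far_edgeP; exists h => //.
by split => // x xh /(hx x xh); apply: leq_trans.
Qed.

Lemma near_edge_mono v k k' : k <= k' -> near_edge v k -> near_edge v k'.
Proof.
move=> kk' /near_edgeP[h hH [vh hx]]; apply/near_edgeP; exists h => //.
by split => // x /hx /leq_trans; apply.
Qed.

(* An edge avoiding v whose vertices all lie at distance >= k from v can be
   pushed onto v: repeatedly exchange its farthest vertex for v. *)
Lemma far_edge_of_edge v k h0 : h0 \in H -> v \notin h0 ->
  (forall x, x \in h0 -> k <= cdist v x) -> far_edge v k.
Proof.
move: {2}(n - k) (leqnn (n - k)) => m; elim: m k h0 => [|m IH] k h0 hm h0H vh0 hk.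
  by case: (edge_other v h0H) => x /hk; have := cdist_lt v x; lia.
case: (edge_other v h0H) => x0 x0h _.
case: (@arg_maxnP _ x0 (fun x => x \in h0) (cdist v) x0h) => y yh0 ymax.
case: (boolP (v |: (h0 :\ y) \in H)) => eH.
  apply/far_edgeP; exists (v |: (h0 :\ y)) => //; split; first exact: setU11.
  by move=> x; rewrite in_setU1 in_setD1 => /orP[/eqP->|/andP[_ /hk]] //; rewrite eqxx.
case: (exchange_gap h0H vh0 yh0 eH) => h hH [b [a [yin outh0 inh]]].
case: (edge_other y h0H) => w wh0 wy.
have wy_lt : cdist v w < cdist v y.
  by rewrite ltn_neqAle (inj_eq (@cdist_inj _ v)) wy; apply: ymax.
have wb : cdist v w <= b by have := outh0 w wh0 wy; clear -yin wy_lt; lia.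
have hkw := hk w wh0.
have vh : v \notin h by apply/negP => /inh; rewrite cdist_id.
apply: (far_edge_mono (leqnSn k)); apply: (IH k.+1 h) => // [|x /inh].
  by clear -hm; lia.
by clear -wb hkw; lia.
Qed.

(* Dually, exchanging the nearest vertex for v. *)
Lemma near_edge_of_edge v k h0 : h0 \in H -> v \notin h0 ->
  (forall x, x \in h0 -> cdist v x <= k) -> near_edge v k.
Proof.
elim: k h0 => [|k IH] h0 h0H vh0 hk.
  by case: (edge_other v h0H) => x xh; move: (hk x xh); rewrite leqn0 cdist_eq0 => /eqP->; rewrite eqxx.
case: (edge_other v h0H) => x0 x0h _.
case: (@arg_minnP _ x0 (fun x => x \in h0) (cdist v) x0h) => y yh0 ymin.
case: (boolP (v |: (h0 :\ y) \in H)) => eH.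
  apply/near_edgeP; exists (v |: (h0 :\ y)) => //; split; first exact: setU11.
  by move=> x; rewrite in_setU1 in_setD1 => /orP[/eqP->|/andP[_ /hk]] //; rewrite cdist_id.
case: (exchange_gap h0H vh0 yh0 eH) => h hH [b [a [yin outh0 inh]]].
case: (edge_other y h0H) => w wh0 wy.
have yw_lt : cdist v y < cdist v w.
  by rewrite ltn_neqAle eq_sym (inj_eq (@cdist_inj _ v)) wy; apply: ymin.
have aw : a <= cdist v w by have := outh0 w wh0 wy; clear -yin yw_lt; lia.
have hkw := hk w wh0.
have vh : v \notin h by apply/negP => /inh; rewrite cdist_id.
apply: (near_edge_mono (leqnSn k)); apply: (IH h) => // x /inh.
by clear -aw hkw; lia.
Qed.

Lemma far_edge_hits v k h : ~~ far_edge v k -> h \in H ->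
  exists2 x, x \in h & x != v /\ cdist v x < k.
Proof.
move=> nofar hH; case: (boolP [exists x in h, (x != v) && (cdist v x < k)]).
  by case/exists_inP => x xh /andP[xv xk]; exists x.
move/exists_inPn => none; case/negP: nofar.
have far x : x \in h -> x != v -> k <= cdist v x.
  by move=> xh xv; move: (none x xh); rewrite xv /= -leqNgt.
case: (boolP (v \in h)) => vh; first by apply/far_edgeP; exists h.
by apply: (far_edge_of_edge hH vh) => x xh; apply: far => //; apply: contraNneq vh => <-.
Qed.

Lemma near_edge_hits v k h : ~~ near_edge v k -> h \in H ->
  exists2 x, x \in h & k < cdist v x.
Proof.
move=> nonear hH; case: (boolP [exists x in h, k < cdist v x]).
  by case/exists_inP => x; exists x.
move/exists_inPn => none; case/negP: nonear.
have near x : x \in h -> cdist v x <= k by move=> xh; move: (none x xh); rewrite -leqNgt.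
case: (boolP (v \in h)) => vh; first by apply/near_edgeP; exists h.
exact: (near_edge_of_edge hH vh).
Qed.

(* Part (1): every vertex lies on an edge; H is nonempty, and any edge can be
   pushed onto v. *)
Lemma edge_through v : exists2 h, h \in H & v \in h.
Proof.
have ce : #|window v 0 (r - 1)| = r by rewrite card_window; lia.
have [h0 h0H] : exists h0, h0 \in H.
  case: (boolP (window v 0 (r - 1) \in H)) => eH; first by exists (window v 0 (r - 1)).
  by case: (nonedge_separated ce eH) => h hH _; exists h.
case: (boolP (v \in h0)) => vh0; first by exists h0.
have /far_edgeP[h hH [vh _]] := far_edge_of_edge (k := 0) h0H vh0 (fun _ _ => leq0n _).
by exists h.
Qed.

Lemma far_edge_lt v k : far_edge v k -> k < n.
Proof.
case/far_edgeP => h hH [_ hx]; case: (edge_other v hH) => x xh xv.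
exact: leq_ltn_trans (hx x xh xv) (cdist_lt v x).
Qed.

Lemma near_edge_gt0 v k : near_edge v k -> 0 < k.
Proof.
case/near_edgeP => h hH [_ hx]; case: (edge_other v hH) => x xh xv.
by apply: leq_trans (hx x xh); rewrite lt0n cdist_eq0.
Qed.

Lemma reach_far_edge v u :
  (exists2 h, h \in H & (v \in h) && (h \subset carc u v)) <->
  0 < cdist v u /\ far_edge v (cdist v u).
Proof.
have arc x : (x \in carc u v) = if cdist v u <= 0 then cdist v u <= cdist v x <= 0
                                else (cdist v u <= cdist v x) || (cdist v x <= 0).
  by rewrite (mem_carc v) cdist_id.
split.
- case=> h hH /andP[vh /subsetP sub]; case: (edge_other v hH) => x xh xv.
  have x0 : 0 < cdist v x by rewrite lt0n cdist_eq0.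
  have u0 : 0 < cdist v u by move: (sub x xh); rewrite arc; case: ifP; lia.
  split => //; apply/far_edgeP; exists h => //; split => // y yh yv.
  have y0 : 0 < cdist v y by rewrite lt0n cdist_eq0.
  by move: (sub y yh); rewrite arc; case: ifP; lia.
- case=> u0 /far_edgeP[h hH [vh hx]]; exists h => //; rewrite vh; apply/subsetP => x xh.
  rewrite arc; case: (eqVneq x v) => [->|xv]; first by rewrite cdist_id; case: ifP; lia.
  by have := hx x xh xv; case: ifP; lia.
Qed.

Lemma reach_near_edge v u :
  (exists2 h, h \in H & (v \in h) && (h \subset carc v u)) <-> near_edge v (cdist v u).
Proof.
have arc x : (x \in carc v u) = (cdist v x <= cdist v u).
  by rewrite (mem_carc v) cdist_id.
split.
- case=> h hH /andP[vh /subsetP sub]; apply/near_edgeP; exists h => //.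
  by split => // x /sub; rewrite arc.
- case/near_edgeP=> h hH [vh hx]; exists h => //; rewrite vh.
  by apply/subsetP => x /hx; rewrite arc.
Qed.

Lemma lambdaE v l : is_lambda H v l <->
  [/\ 0 < cdist v l, far_edge v (cdist v l) & ~~ far_edge v (cdist v l).+1].
Proof.
rewrite /is_lambda !reach_far_edge cdist_vsucc; last by lia.
split => [[[l0 fl] nfar]|[l0 fl nfar]]; split => //.
  apply/negP => far1; apply: nfar; have := far_edge_lt far1.
  by rewrite addn1 => lt1; rewrite lt1.
by rewrite addn1; case: ifP => _ [// _]; apply/negP.
Qed.

Lemma rhoE v p : is_rho H v p <->
  [/\ 0 < cdist v p, near_edge v (cdist v p) & ~~ near_edge v (cdist v p - 1)].
Proof.
rewrite /is_rho !reach_near_edge cdist_vpred; last by lia.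
split => [[np nnear]|[p0 np nnear]].
  have p0 := near_edge_gt0 np; move: nnear; rewrite (negbTE (lt0n_neq0 p0)).
  by split => //; apply/negP.
by rewrite (negbTE (lt0n_neq0 p0)); split => //; apply/negP.
Qed.

Lemma lambda_exists v : exists l, is_lambda H v l.
Proof.
have far1 : far_edge v 1.
  case: (edge_through v) => h hH vh; apply/far_edgeP; exists h => //.
  by split => // x _ xv; rewrite lt0n cdist_eq0.
have ub k : far_edge v k -> k <= n by move/far_edge_lt/ltnW.
case: (ex_maxnP (ex_intro (fun k => far_edge v k) 1 far1) ub) => k fk kmax.
exists (vadd v k); apply/lambdaE; rewrite cdist_vadd ?(far_edge_lt fk) //.
by split => //; [apply: kmax far1 | apply/negP => /kmax; rewrite ltnn].
Qed.

Lemma rho_exists v : exists p, is_rho H v p.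
Proof.
have nearn : near_edge v (n - 1).
  case: (edge_through v) => h hH vh; apply/near_edgeP; exists h => //.
  by split => // x _; have := cdist_lt v x; lia.
case: (ex_minnP (ex_intro (fun k => near_edge v k) _ nearn)) => k nk kmin.
have kn : k < n by have := kmin _ nearn; lia.
exists (vadd v k); apply/rhoE; rewrite cdist_vadd //.
have k0 := near_edge_gt0 nk.
by split => //; apply/negP => /kmin; lia.
Qed.

(* There is an edge through v with all other vertices at distance >= r:
   otherwise v together with the next block of r - 1 vertices after distance r
   would be separated from an edge, which is either too small or pushable. *)
Lemma far_edge_r v : far_edge v r.
Proof.
set g := v |: window v r (2 * r - 2).
have cg : #|g| = r by rewrite card_fan; lia.
case: (boolP (g \in H)) => gH.
  apply/far_edgeP; exists g => //; split; first exact: setU11.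
  by move=> x; rewrite in_setU1 => /orP[/eqP->|]; [rewrite eqxx | rewrite inE; lia].
case: (nonedge_gap cg gH (setU11 _ _)) => h hH [b [a [ban outg inh]]].
have qg : vadd v r \in g by rewrite in_setU1 inE cdist_vadd; lia.
move: (outg _ qg); rewrite cdist_vadd; last by lia.
case: (leqP a r) => ar rout.
  have : #|h| <= (r - 1).+1 - 1 by apply: (card_le_window (v := v)) => [||x /inh]; lia.
  by rewrite edge_card //; lia.
have vh : v \notin h by apply/negP => /inh; rewrite cdist_id.
by apply: (far_edge_of_edge hH vh) => x /inh; lia.
Qed.

Lemma near_edge_n_r v : near_edge v (n - r).
Proof.
set g := v |: window v (n - 2 * r + 2) (n - r).
have cg : #|g| = r by rewrite card_fan; lia.
case: (boolP (g \in H)) => gH.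
  apply/near_edgeP; exists g => //; split; first exact: setU11.
  by move=> x; rewrite in_setU1 => /orP[/eqP->|]; [rewrite cdist_id | rewrite inE; lia].
case: (nonedge_gap cg gH (setU11 _ _)) => h hH [b [a [ban outg inh]]].
have qg : vadd v (n - r) \in g by rewrite in_setU1 inE cdist_vadd; lia.
move: (outg _ qg); rewrite cdist_vadd; last by lia.
case: (leqP a (n - r)) => ar rout; last first.
  have : #|h| <= (n - 1).+1 - (n - r).+1.
    apply: (card_le_window (v := v)) => [||x xh]; try lia.
    by have := inh x xh; have := cdist_lt v x; lia.
  by rewrite edge_card //; lia.
have vh : v \notin h by apply/negP => /inh; rewrite cdist_id.
by apply: (near_edge_of_edge hH vh) => x /inh; lia.
Qed.

(* Position bounds for lambda(v) and rho(v): the universal far/near edges give one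
   side, counting the r vertices of the witnessing edge gives the other. *)
Lemma lambda_bounds v l : is_lambda H v l -> r <= cdist v l <= n - r + 1.
Proof.
case/lambdaE => l0 fl nfar; apply/andP; split.
  by rewrite leqNgt; apply: contra nfar => lr; apply: far_edge_mono (far_edge_r v).
case/far_edgeP: fl => h hH [vh hx].
have : #|h :\ v| <= (n - 1).+1 - cdist v l.
  apply: (card_le_window (v := v)) => [||x]; try by have := cdist_lt v l; lia.
  by rewrite in_setD1 => /andP[xv xh]; have := hx x xh xv; have := cdist_lt v x; lia.
suff -> : #|h :\ v| = r - 1 by lia.
by move: (edge_card hH); rewrite (cardsD1 v h) vh => <-; rewrite addKn.
Qed.

Lemma rho_bounds v p : is_rho H v p -> r - 1 <= cdist v p <= n - r.
Proof.
case/rhoE => p0 np nnear; apply/andP; split; last first.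
  by rewrite leqNgt; apply: contra nnear => rp; apply: near_edge_mono (near_edge_n_r v); lia.
case/near_edgeP: np => h hH [vh hx].
have : #|h| <= (cdist v p).+1 - 0.
  by apply: (card_le_window (v := v)) => [||x /hx]; have := cdist_lt v p; lia.
by rewrite edge_card //; lia.
Qed.

(* rho(v) comes no later than lambda(v).  Otherwise v followed by the
   r - 1 vertices just beyond lambda(v) is a non-edge; the edge in its gap would
   have to reach both below lambda(v) and beyond rho(v), across the gap's end. *)
Lemma rho_le_lambda v l p : is_lambda H v l -> is_rho H v p -> cdist v p <= cdist v l.
Proof.
move=> hl hp; rewrite leqNgt; apply/negP => lp.
have := lambda_bounds hl; have := rho_bounds hp => bp bl.
case/lambdaE: hl => _ _ nfar; case/rhoE: hp => _ _ nnear.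
set g := v |: window v (cdist v l).+1 (cdist v l + (r - 1)).
have cg : #|g| = r by rewrite card_fan; lia.
have gH : g \notin H.
  apply: contra nfar => gH; apply/far_edgeP; exists g => //; split; first exact: setU11.
  by move=> x; rewrite in_setU1 => /orP[/eqP->|]; [rewrite eqxx | rewrite inE; lia].
case: (nonedge_gap cg gH (setU11 _ _)) => h hH [b [a [ban outg inh]]].
have qg : vadd v (cdist v l).+1 \in g by rewrite in_setU1 inE cdist_vadd; lia.
case: (far_edge_hits nfar hH) => x1 x1h [_ x1l].
case: (near_edge_hits nnear hH) => x2 x2h x2p.
move: (outg _ qg) (inh _ x1h) (inh _ x2h); rewrite cdist_vadd.
  by clear -x1l x2p lp; lia.
by clear -lp bp r_ge2; lia.
Qed.

(* Part (4): any r-set through v and a vertex w between rho(v) and lambda(v) is an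
   edge: an edge in its gap would be separated from the lambda-witness (if the gap
   ends before w) or from the rho-witness (if it starts after w). *)
Lemma span_edges v l p w : is_lambda H v l -> is_rho H v p -> w \in carc p l ->
  forall e, #|e| = r -> v \in e -> w \in e -> e \in H.
Proof.
move=> hl hp wA e ce ve we; apply/negPn/negP => eH.
have pl := rho_le_lambda hl hp.
case/lambdaE: hl => _ /far_edgeP[h1 h1H [vh1 far1]] _.
case/rhoE: hp => _ /near_edgeP[h2 h2H [vh2 near2]] _.
move: wA; rewrite (mem_carc v) pl => /andP[pw wl].
case: (nonedge_gap ce eH ve) => h hH [b [a [/andP[ba an] oute inh]]].
have wout := oute w we.
case: (leqP a (cdist v w)) => aw.
  apply: (no_edge_in_gap an hH h1H inh) => x xh1.
  case: (eqVneq x v) => [->|xv]; first by rewrite cdist_id.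
  by have := far1 x xh1 xv; clear -aw wl; lia.
by apply: (no_edge_in_gap an hH h2H inh) => x /near2; clear -wout aw pw; lia.
Qed.

(* Part (2), read off the position bounds. *)
Lemma lambda_outside v l : is_lambda H v l ->
  l \notin carc (vsub v (r - 2)) (vadd v (r - 1)).
Proof.
move/lambda_bounds; rewrite (mem_carc v) cdist_vsub ?cdist_vadd; try lia.
by do ! case: ifP; lia.
Qed.

Lemma rho_outside v p : is_rho H v p ->
  p \notin carc (vsub v (r - 1)) (vadd v (r - 2)).
Proof.
move/rho_bounds; rewrite (mem_carc v) cdist_vsub ?cdist_vadd; try lia.
by do ! case: ifP; lia.
Qed.

Lemma rho_in_arc v l p : is_lambda H v l -> is_rho H v p ->
  [/\ p != v, l != v & p \in ocarc v l].
Proof.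
move=> hl hp; have pl := rho_le_lambda hl hp.
case/lambdaE: hl => l0 _ _; case/rhoE: hp => p0 _ _.
by rewrite -!(cdist_eq0 v) -!lt0n inE p0 l0 pl.
Qed.

End Saturated.

Theorem proposition3p4 (r n : nat) (H : {set {set 'I_n}}) :
  2 <= r -> 2 * r <= n -> M1_saturated r H ->
  (* (1) every vertex lies in an edge; hence lambda, rho are defined *)
  (forall v : 'I_n, exists2 h, h \in H & v \in h) /\
  (forall v : 'I_n, (exists u, is_lambda H v u) /\ (exists u, is_rho H v u)) /\
  (* (2) *)
  (forall v l : 'I_n, is_lambda H v l ->
     l \notin carc (vsub v (r - 2)) (vadd v (r - 1))) /\
  (forall v p : 'I_n, is_rho H v p ->
     p \notin carc (vsub v (r - 1)) (vadd v (r - 2))) /\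
  (* (3) *)
  (forall v l p : 'I_n, is_lambda H v l -> is_rho H v p ->
     [/\ p != v, l != v & p \in ocarc v l]) /\
  (* (4) *)
  (forall v l p w : 'I_n, is_lambda H v l -> is_rho H v p ->
     w \in carc p l ->
     forall e : {set 'I_n}, #|e| = r -> v \in e -> w \in e -> e \in H).
Proof.
move=> r_ge2 n_ge2r satH.
split; first exact: (edge_through r_ge2 n_ge2r satH).
split.
  move=> v; split; [exact: (lambda_exists r_ge2 n_ge2r satH) v |].
  exact: (rho_exists r_ge2 n_ge2r satH) v.
split; first exact: (lambda_outside r_ge2 n_ge2r satH).
split; first exact: (rho_outside r_ge2 n_ge2r satH).
split; first exact: (rho_in_arc r_ge2 n_ge2r satH).
exact: (span_edges r_ge2 n_ge2r satH).
Qed.
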